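(* Every voting rule in the EJR-Exact family satisfies EJR: for every ballot profile $\mathcal{A}$ over $C$, every $k\le|C|$, and every choice of the subprocedures Alg1, Alg2, Alg3 (and every resolution of their choices), the output committee $W$ provides EJR for $(\mathcal{A},k)$.
   Context: Setting: voters $N=\{1,\dots,n\}$, candidates $C=\{c_1,\dots,c_m\}$, approval ballots $A_i\subseteq C$, $\mathcal{A}=(A_1,\dots,A_n)$, $k$ a positive integer with $k\le|C|$, $q=n/k$, $N_c=\{i: c\in A_i\}$, $n_c=|N_c|$. Convention: $\max\emptyset=0$. EJR: for $\ell\in\{1,\dots,k\}$, $N^*\subseteq N$ is $\ell$-cohesive if $|N^*|\ge\ell n/k$ and $|\bigcap_{i\in N^*}A_i|\ge\ell$. A committee $W$, $|W|=k$, provides EJR if for every $\ell$ and every $\ell$-cohesive $N^*$ some $i\in N^*$ has $|A_i\cap W|\ge\ell$. Dissatisfaction level: for $W\subseteq C$ with $|W|\le k$ and $c\in C\setminus W$, $\ell(c,W)$ is the largest nonnegative integer $\ell$ with $\ell=\lfloor \frac{k}{n}|\{i\in N: c\in A_i,\ |A_i\cap W|<\ell\}|\rfloor$. Along a run with current sets $W_j$, write $\ell_j(c)=\ell(c,W_j)$, and for $c\in C\setminus W_j$, $i\in N_c$: $\ell_j(i,c)=\max_{c'\in A_i\setminus(W_j\cup\{c\})}\ell_j(c')$, and $g_i^j(c)=0$ if $\ell_j(i,c)\le|A_i\cap W_j|$, $g_i^j(c)=\frac{\ell_j(i,c)-|A_i\cap W_j|-1}{\ell_j(i,c)}$ otherwise.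 EJR-Exact family (parametrized by arbitrary subprocedures Alg1, Alg2, Alg3): set $W_0=\emptyset$, $f_i^0=1$ for all $i$. For $j=1,\dots,k$: for each $c\in C\setminus W_{j-1}$ compute $x_c=\sum_{i\in N_c}(f_i^{j-1}-g_i^{j-1}(c))$. If some $c$ has $x_c\ge q$ (Stage 1, ''normal iteration''): Alg1 selects any such $w_j$; set $f_i^j=f_i^{j-1}$ for $i\notin N_{w_j}$; Alg2 chooses values $f_i^j$ for $i\in N_{w_j}$ with $0\le f_i^j\le f_i^{j-1}$, $\sum_{i\in N_{w_j}}(f_i^{j-1}-f_i^j)=q$, and $f_i^j\ge g_i^{j-1}(w_j)$ for every $i\in N_{w_j}$ with $\ell_{j-1}(i,w_j)>|A_i\cap W_{j-1}|$; set $W_j=W_{j-1}\cup\{w_j\}$. Otherwise stop the loop. Finally, if fewer than $k$ candidates have been selected (Stage 2), Alg3 adds arbitrary further candidates from $C$ not yet selected until $k$ are selected. The output $W$ is the set of all selected candidates. *)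

From HB Require Import structures.
From mathcomp Require Import all_boot all_order all_algebra.
Set Implicit Arguments. Unset Strict Implicit. Unset Printing Implicit Defensive.
Import Order.TTheory GRing.Theory Num.Theory.

(* Voters are 'I_n, candidates are 'I_m, ballots A : 'I_n -> {set 'I_m}. *)

Section Defs.
Variables (n m k : nat) (A : 'I_n -> {set 'I_m}).

(* N* is l-cohesive: |N*| >= l n / k (i.e. k |N*| >= l n) and |/\ A_i| >= l *)
Definition cohesive (l : nat) (Ns : {set 'I_n}) : bool :=
  (l * n <= k * #|Ns|)%N && (l <= #|\bigcap_(i in Ns) A i|)%N.

Definition EJR (W : {set 'I_m}) : Prop :=
  #|W| = k /\
  forall (l : nat) (Ns : {set 'I_n}), (1 <= l <= k)%N -> cohesive l Ns ->
    exists2 i, i \in Ns & (l <= #|A i :&: W|)%N.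

Definition dcount (c : 'I_m) (W : {set 'I_m}) (l : nat) : nat :=
  #|[set i | (c \in A i) && (#|A i :&: W| < l)%N]|.

(* ell(c,W): the largest l with l = floor(k/n * dcount c W l).
   Every such l satisfies l <= k (dcount <= n), so we maximise over l < k+1. *)
Definition ell (c : 'I_m) (W : {set 'I_m}) : nat :=
  \max_(l < k.+1 | (l : nat) == (k * dcount c W l) %/ n) (l : nat).

(* ell(i,c) = max over c' in A_i \ (W ∪ {c}) of ell(c'), with max ∅ = 0 *)
Definition ell_vc (i : 'I_n) (c : 'I_m) (W : {set 'I_m}) : nat :=
  \max_(c' in A i :\: (c |: W)) ell c' W.

Variable R : realFieldType.
Local Open Scope ring_scope.

Definition gval (i : 'I_n) (c : 'I_m) (W : {set 'I_m}) : R :=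
  let L := ell_vc i c W in
  let a := #|A i :&: W| in
  if (L <= a)%N then 0 else ((L - a - 1)%N)%:R / L%:R.

Definition quota : R := n%:R / k%:R.

Definition xval (f : 'I_n -> R) (W : {set 'I_m}) (c : 'I_m) : R :=
  \sum_(i | c \in A i) (f i - gval i c W).

Definition Wpre (ws : seq 'I_m) (j : nat) : {set 'I_m} := [set c in take j ws].

(* A complete run of an EJR-Exact rule: ws = (w_1,...,w_t) are the candidates
   selected in Stage 1, fs j = f^j the weights, W the final output. *)
Definition EJRExact_run (ws : seq 'I_m) (fs : nat -> 'I_n -> R)
    (W : {set 'I_m}) : Prop :=
  [/\ (size ws <= k)%N /\ (forall i, fs 0%N i = 1),
      (forall (j : nat) (x0 : 'I_m), (j < size ws)%N ->
        let Wj := Wpre ws j in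
        let w := nth x0 ws j in
        [/\ w \notin Wj,
            quota <= xval (fs j) Wj w,
            (forall i, w \notin A i -> fs j.+1 i = fs j i),
            (forall i, w \in A i ->
               [/\ 0 <= fs j.+1 i, fs j.+1 i <= fs j i &
                   ((#|A i :&: Wj| < ell_vc i w Wj)%N -> gval i w Wj <= fs j.+1 i)]) &
            \sum_(i | w \in A i) (fs j i - fs j.+1 i) = quota]),
      (* loop stopped early only if no candidate reaches the quota *)
      ((size ws < k)%N -> forall c, c \notin Wpre ws (size ws) ->
          xval (fs (size ws)) (Wpre ws (size ws)) c < quota),
      (* Stage 2: arbitrary completion to k candidates *)
      Wpre ws (size ws) \subset W & #|W| = k].
End Defs.

From HB Require Import structures.
From mathcomp Require Import all_boot all_order all_algebra.
From mathcomp Require Import zify lra.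
Set Implicit Arguments. Unset Strict Implicit. Unset Printing Implicit Defensive.
Import Order.TTheory GRing.Theory Num.Theory.

(* Every weight obeys the invariant [f_i >= 1 - |A_i ∩ W_j| / M_i], where [M_i]
   is the largest dissatisfaction level among the unelected candidates approved
   by [i]; levels only drop as [W_j] grows, and the constraint [f_i >= g_i(w)]
   imposed on Alg2 is exactly what keeps the invariant when [i] approves [w].
   After the loop, let [c] be an unelected candidate of maximal level [L].  If
   [L > 0], each of the at least [L n / k] voters approving [c] with fewer than
   [L] elected candidates contributes [f_i - g_i(c) >= 1 / L], so [x_c >= q]:
   the loop could not have stopped before [k] steps, and after [k] steps the
   total weight [n - k q] is zero.  So every unelected candidate has level 0,
   whereas a common candidate of an unsatisfied [l]-cohesive group has level
   at least [l]. *)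

Section DissatisfactionLevel.
Variables (n m k : nat) (A : 'I_n -> {set 'I_m}).
Hypothesis n_gt0 : (0 < n)%N.
Implicit Types (c : 'I_m) (W : {set 'I_m}) (l : nat).

Lemma dcount_le c W l : (dcount A c W l <= n)%N.
Proof. by apply: leq_trans (max_card _) _; rewrite card_ord. Qed.

Lemma dcount_monol c W l1 l2 : (l1 <= l2)%N -> (dcount A c W l1 <= dcount A c W l2)%N.
Proof.
move=> le12; apply/subset_leq_card/subsetP => i; rewrite !inE => /andP[-> lt1].
exact: leq_trans lt1 le12.
Qed.

Lemma dcount_antiW c W1 W2 l :
  W1 \subset W2 -> (dcount A c W2 l <= dcount A c W1 l)%N.
Proof.
move=> sW; apply/subset_leq_card/subsetP => i; rewrite !inE => /andP[-> lt2].
exact/leq_ltn_trans/lt2/subset_leq_card/setIS.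
Qed.

(* [ell c W] is the largest fixpoint of this map, bounded by [k]. *)
Definition ell_step c W l := (k * dcount A c W l %/ n)%N.

Lemma ell_step_le c W l : (ell_step c W l <= k)%N.
Proof.
apply: leq_trans (leq_div2r n (leq_mul (leqnn k) (dcount_le c W l))) _.
by rewrite mulnK.
Qed.

Lemma ell_step_monol c W l1 l2 : (l1 <= l2)%N -> (ell_step c W l1 <= ell_step c W l2)%N.
Proof. by move=> le12; rewrite leq_div2r // leq_mul2l dcount_monol ?orbT. Qed.

Lemma ell_step_antiW c W1 W2 l :
  W1 \subset W2 -> (ell_step c W2 l <= ell_step c W1 l)%N.
Proof. by move=> sW; rewrite leq_div2r // leq_mul2l dcount_antiW ?orbT. Qed.

Lemma ell_le c W : (ell k A c W <= k)%N.
Proof. by apply/bigmax_leqP => l _; rewrite -ltnS. Qed.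

Lemma ell_fixpoint c W : ell_step c W (ell k A c W) = ell k A c W.
Proof.
have step0 : [pred l : 'I_k.+1 | l == ell_step c W l :> nat] ord0.
  rewrite /= /ell_step; suff -> : dcount A c W 0 = 0%N by rewrite muln0 div0n.
  by apply/eqP; rewrite cards_eq0; apply/eqP/setP => i; rewrite !inE ltn0 andbF.
rewrite /ell (bigop.bigmax_eq_arg _ step0).
by case: arg_maxnP => // l /eqP.
Qed.

Lemma leq_ell_fixpoint c W l :
  (l <= k)%N -> ell_step c W l = l -> (l <= ell k A c W)%N.
Proof.
rewrite -ltnS /ell => lt_lk fix_l.
apply: (@leq_bigmax_cond _ [pred l : 'I_k.+1 | l == ell_step c W l :> nat] _ (Ordinal lt_lk)).
by rewrite /= fix_l.
Qed.

(* Knaster-Tarski: a post-fixpoint of the monotone [ell_step] lies below its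
   largest fixpoint. *)
Lemma leq_ell c W l : (l <= k)%N -> (l <= ell_step c W l)%N -> (l <= ell k A c W)%N.
Proof.
move=> le_lk; have [d] := ubnP (k - l); elim: d l le_lk => // d IH l le_lk lt_d le_step.
have [fix_l | ne_l] := eqVneq (ell_step c W l) l; first exact: leq_ell_fixpoint.
have lt_step : (l < ell_step c W l)%N by rewrite ltn_neqAle eq_sym ne_l.
apply: leq_trans (ltnW lt_step) (IH _ (ell_step_le _ _ _) _ _).
  by have := ell_step_le c W l; lia.
exact: ell_step_monol (ltnW lt_step).
Qed.

Lemma ell_antiW c W1 W2 : W1 \subset W2 -> (ell k A c W2 <= ell k A c W1)%N.
Proof.
move=> sW; apply: leq_ell; first exact: ell_le.
by rewrite -{1}ell_fixpoint ell_step_antiW.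
Qed.

Lemma ell_mul_le c W : (ell k A c W * n <= k * dcount A c W (ell k A c W))%N.
Proof. by rewrite -{1}ell_fixpoint leq_divM. Qed.

Lemma cohesive_leq_ell l Ns c W :
  (l <= k)%N -> cohesive k A l Ns -> c \in \bigcap_(i in Ns) A i ->
  {in Ns, forall i, #|A i :&: W| < l}%N -> (l <= ell k A c W)%N.
Proof.
move=> le_lk /andP[coh _] cNs unsat; apply: leq_ell => //.
rewrite leq_divRL // (leq_trans coh) // leq_mul2l; apply/orP; right.
by apply/subset_leq_card/subsetP => i iNs; rewrite inE (bigcapP cNs) ?unsat.
Qed.

Lemma cohesive_unelected l Ns W :
  (0 < l)%N -> cohesive k A l Ns -> {in Ns, forall i, #|A i :&: W| < l}%N ->
  exists2 c, c \in \bigcap_(i in Ns) A i & c \notin W.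
Proof.
move=> l_gt0 /andP[coh big] unsat.
have [Ns0 | [i iNs]] := set_0Vmem Ns.
  by move: coh; rewrite Ns0 cards0 muln0 leqn0 muln_eq0 !gtn_eqF.
suff /subsetPn[c cNs cW] : ~~ (\bigcap_(j in Ns) A j \subset W) by exists c.
apply: contraL (unsat i iNs) => sW; rewrite -leqNgt (leq_trans big) //.
by apply/subset_leq_card; rewrite subsetI sW bigcap_inf.
Qed.

Definition ell_max i (X : {set 'I_m}) := (\max_(c in A i :\: X) ell k A c X)%N.

Lemma ell_max_setU1_le_vc i w X : (ell_max i (w |: X) <= ell_vc k A i w X)%N.
Proof.
apply/bigmax_leqP => c cAX; apply: leq_trans (ell_antiW c (subsetUr [set w] X)) _.
exact: (leq_bigmax_cond _ cAX).
Qed.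

Lemma ell_max_setU1 i w X : (ell_max i (w |: X) <= ell_max i X)%N.
Proof.
apply/bigmax_leqP => c; rewrite !inE negb_or => /andP[/andP[_ cX] cA].
apply: leq_trans (ell_antiW c (subsetUr [set w] X)) _.
by apply: (leq_bigmax_cond _ (_ : c \in A i :\: X)); rewrite inE cX.
Qed.

End DissatisfactionLevel.

Lemma Wpre_succ m (s : seq 'I_m) j x0 :
  (j < size s)%N -> Wpre s j.+1 = nth x0 s j |: Wpre s j.
Proof.
by move=> lt_j; apply/setP => y; rewrite !inE (take_nth x0 lt_j) mem_rcons inE.
Qed.

Lemma card_setIU1 (T : finType) (B X : {set T}) w :
  w \in B -> w \notin X -> #|B :&: (w |: X)| = #|B :&: X|.+1.
Proof.
move=> wB wX; rewrite setIUr (setIidPr _) ?sub1set // cardsU1 inE.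
by rewrite (negbTE wX) andbF.
Qed.

Lemma setIU1_notin (T : finType) (B X : {set T}) w :
  w \notin B -> B :&: (w |: X) = B :&: X.
Proof.
by move=> wB; apply/setP => x; rewrite !inE; case: eqP => // ->; rewrite (negbTE wB).
Qed.

Section Gain.
Local Open Scope ring_scope.
Variable R : realFieldType.

Lemma ler_wpM_bound (x y z a : R) : y * z <= a -> 0 <= x <= y -> 0 <= a -> x * z <= a.
Proof.
move=> le_yz /andP[x_ge0 le_xy] a_ge0; have [z_ge0 | z_lt0] := lerP 0 z.
  exact: le_trans (ler_wpM2r z_ge0 le_xy) le_yz.
exact: le_trans (mulr_ge0_le0 x_ge0 (ltW z_lt0)) a_ge0.
Qed.

Lemma ler_1Bdiv (L b f : R) : 0 < L -> (1 - b / L <= f) = (L * (1 - f) <= b).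
Proof. by move=> L_gt0; rewrite lerBlDr addrC -lerBlDr ler_pdivlMr // mulrC. Qed.

Variables (n m k : nat) (A : 'I_n -> {set 'I_m}).
Implicit Types (i : 'I_n) (c : 'I_m) (W : {set 'I_m}).

Lemma gval_ge0 i c W : 0 <= gval k A R i c W.
Proof. by rewrite /gval; case: ifP => // _; rewrite divr_ge0. Qed.

Lemma gval_eq0 i c W : (ell_vc k A i c W <= #|A i :&: W|)%N -> gval k A R i c W = 0.
Proof. by rewrite /gval => ->. Qed.

Lemma gvalE i c W : (#|A i :&: W| < ell_vc k A i c W)%N ->
  gval k A R i c W = 1 - (#|A i :&: W|.+1)%:R / (ell_vc k A i c W)%:R.
Proof.
rewrite /gval; set L := ell_vc _ _ _ _ _; set a := #|_| => lt_aL.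
rewrite leqNgt lt_aL /= subn1 -subnS natrB // mulrBl divff // pnatr_eq0 -lt0n.
exact: leq_ltn_trans lt_aL.
Qed.

Lemma gval_le i c W L : (#|A i :&: W| < L)%N -> (ell_vc k A i c W <= L)%N ->
  gval k A R i c W <= 1 - (#|A i :&: W|.+1)%:R / L%:R.
Proof.
move=> lt_aL le_vc; have L_gt0 : 0 < L%:R :> R by rewrite ltr0n (leq_ltn_trans _ lt_aL).
have [lt_a | le_a] := ltnP #|A i :&: W| (ell_vc k A i c W).
  rewrite gvalE // lerD2l lerN2 ler_wpM2l // lef_pV2 ?posrE ?ler_nat //.
  by rewrite ltr0n (leq_ltn_trans _ lt_a).
by rewrite gval_eq0 // subr_ge0 ler_pdivrMr // mul1r ler_nat.
Qed.

End Gain.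

Section Run.
Local Open Scope ring_scope.
Variables (R : realFieldType) (n m k : nat) (A : 'I_n -> {set 'I_m})
  (ws : seq 'I_m) (fs : nat -> 'I_n -> R) (Wout : {set 'I_m}).
Hypotheses (n_gt0 : (0 < n)%N) (k_gt0 : (0 < k)%N).
Hypothesis run : EJRExact_run k A ws fs Wout.

(* [M_i (1 - f_i) <= |A_i ∩ W_j|] is the header's invariant with the division
   cleared, so that it also covers [M_i = 0]. *)
Definition weight_inv j := forall i, 0 <= fs j i /\
  (ell_max k A i (Wpre ws j))%:R * (1 - fs j i) <= #|A i :&: Wpre ws j|%:R.

Lemma weight_inv0 : weight_inv 0.
Proof. by have [[_ f0] _ _ _ _] := run; move=> i; rewrite f0 subrr mulr0. Qed.

Lemma run_step j : (j < size ws)%N -> let X := Wpre ws j in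
  exists w, [/\ Wpre ws j.+1 = w |: X, w \notin X,
    forall i, w \notin A i -> fs j.+1 i = fs j i,
    forall i, w \in A i -> [/\ 0 <= fs j.+1 i, fs j.+1 i <= fs j i &
      (#|A i :&: X| < ell_vc k A i w X)%N -> gval k A R i w X <= fs j.+1 i] &
    \sum_(i | w \in A i) (fs j i - fs j.+1 i) = quota n k R].
Proof.
move=> lt_j; have [x0 _] : exists x0 : 'I_m, true by case: (ws) lt_j => // x0; exists x0.
have [_ /(_ j x0 lt_j) [? _ ? ? ?] _ _ _] := run.
by exists (nth x0 ws j); rewrite (Wpre_succ x0 lt_j).
Qed.

Lemma weight_inv_step j : (j < size ws)%N -> weight_inv j -> weight_inv j.+1.
Proof.
move=> /run_step[w [W_succ wX f_out f_in _]] inv_j i; rewrite W_succ.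
set X := Wpre ws j in wX f_in *; have [f_ge0 inv_i] := inv_j i.
have [wAi | wAi] := boolP (w \in A i); last first.
  rewrite f_out // setIU1_notin //; split => //.
  by apply: ler_wpM_bound inv_i _ _; rewrite ?ler0n // ler_nat ell_max_setU1.
have [f'_ge0 _ f'_ge_g] := f_in i wAi; rewrite card_setIU1 //; split => //.
have le_vc := ell_max_setU1_le_vc k A n_gt0 i w X.
have [lt_a | le_a] := ltnP #|A i :&: X| (ell_vc k A i w X).
  have := f'_ge_g lt_a; rewrite gvalE // ler_1Bdiv ?ltr0n ?(leq_ltn_trans _ lt_a) //.
  by move=> h; apply: ler_wpM_bound h _ _; rewrite ?ler0n // ler_nat le_vc.
set M := ell_max k A i (w |: X); apply: le_trans (_ : M%:R * 1 <= _).
  by apply: ler_wpM2l; rewrite ?ler0n // lerBlDr lerDl.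
by rewrite mulr1 ler_nat (leq_trans le_vc) // (leq_trans le_a).
Qed.

Lemma weight_invE j : (j <= size ws)%N -> weight_inv j.
Proof.
elim: j => [|j IH] le_j; first exact: weight_inv0.
exact: weight_inv_step le_j (IH (ltnW le_j)).
Qed.

Lemma total_weight j : (j <= size ws)%N -> \sum_i fs j i = n%:R - j%:R * quota n k R.
Proof.
elim: j => [|j IH] le_j.
  have [[_ f0] _ _ _ _] := run; under eq_bigr do rewrite f0.
  by rewrite sumr_const card_ord mul0r subr0.
have [w [_ _ f_out _ spent]] := run_step le_j.
rewrite (mulrSr 1 j) mulrDl mul1r opprD addrA -IH ?(ltnW le_j) // -spent sumrB.
rewrite (bigID (fun i => w \in A i)) [X in _ = X - _](bigID (fun i => w \in A i)) /=.
by rewrite (eq_bigr _ (fun i => f_out i)) opprB addrAC addrCA subrr addr0.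
Qed.

Let t := size ws.
Let Wt := Wpre ws t.

Lemma xval_term_ge c i : c \notin Wt ->
    (forall c', c' \notin Wt -> ell k A c' Wt <= ell k A c Wt)%N -> c \in A i ->
  (if (#|A i :&: Wt| < ell k A c Wt)%N then (ell k A c Wt)%:R^-1 else 0)
    <= fs t i - gval k A R i c Wt.
Proof.
move=> cWt c_max cAi; set L := ell k A c Wt.
have [f_ge0 inv_i] := weight_invE (leqnn t) i.
have le_vc : (ell_vc k A i c Wt <= L)%N.
  apply/bigmax_leqP => c'; rewrite in_setD in_setU1 negb_or => /andP[/andP[_ c'Wt] _].
  exact: c_max.
have [lt_aL | le_La] := ltnP #|A i :&: Wt| L.
  2: by rewrite gval_eq0 ?subr0 // (leq_trans le_vc).
have L_gt0 : 0 < L%:R :> R by rewrite ltr0n (leq_ltn_trans _ lt_aL).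
have : L%:R * (1 - fs t i) <= #|A i :&: Wt|%:R.
  apply: ler_wpM_bound inv_i _ _; rewrite ?ler0n // ler_nat.
  by apply: (leq_bigmax_cond _ (_ : c \in A i :\: Wt)); rewrite in_setD cWt.
rewrite -ler_1Bdiv // => le_f; have := gval_le R lt_aL le_vc.
by rewrite -natr1 mulrDl mul1r; lra.
Qed.

Lemma quota_le_xval c : c \notin Wt ->
  (forall c', c' \notin Wt -> ell k A c' Wt <= ell k A c Wt)%N -> (0 < ell k A c Wt)%N ->
  quota n k R <= xval k A (fs t) Wt c.
Proof.
move=> cWt c_max; set L := ell k A c Wt => L_gt0.
apply: le_trans (ler_sum _ (fun i => xval_term_ge cWt c_max)).
rewrite -big_mkcondr sumr_const -/L.
have -> : #|(fun i => (c \in A i) && (#|A i :&: Wt| < L)%N)| = dcount A c Wt L.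
  by apply: eq_card => i; rewrite inE.
rewrite -[_ *+ dcount _ _ _ _]mulr_natr.
have := ell_mul_le k A c Wt; rewrite -(ler_nat R) !natrM => count_L.
rewrite /quota ler_pdivrMr ?ltr0n // -mulrA ler_pdivlMl ?ltr0n //.
by rewrite [_ * k%:R]mulrC.
Qed.

Lemma xval_le_total c : xval k A (fs t) Wt c <= \sum_i fs t i.
Proof.
apply: le_trans (_ : _ <= \sum_(i | c \in A i) fs t i) _.
  by apply: ler_sum => i _; rewrite lerBlDr lerDl gval_ge0.
rewrite [X in _ <= X](bigID (fun i => c \in A i)) /= lerDl.
by apply: sumr_ge0 => i _; have [] := weight_invE (leqnn t) i.
Qed.

Lemma ell_unelected_eq0 c : c \notin Wt -> ell k A c Wt = 0%N.
Proof.
move=> cWt; apply/eqP; rewrite -leqn0 leqNgt; apply/negP => L_gt0.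
case: (@arg_maxnP _ c [pred c | c \notin Wt] (fun c => ell k A c Wt) cWt).
move=> c' c'Wt c'_max.
have q_le : quota n k R <= xval k A (fs t) Wt c'.
  by apply: quota_le_xval => //; apply: leq_trans L_gt0 (c'_max _ cWt).
have q_gt0 : 0 < quota n k R by rewrite divr_gt0 ?ltr0n.
have [[le_tk _] _ stop _ _] := run.
have [lt_tk | ge_tk] := ltnP t k; first by have := stop lt_tk c' c'Wt; rewrite ltNge q_le.
move: q_le (xval_le_total c'); rewrite total_weight // (@anti_leq t k) ?le_tk //.
by rewrite [_ * quota _ _ _]mulrC divfK ?pnatr_eq0 -?lt0n // subrr; lra.
Qed.

End Run.

Theorem mainTheorem7 (R : realFieldType) (n m k : nat)
    (A : 'I_n -> {set 'I_m}) (ws : seq 'I_m) (fs : nat -> 'I_n -> R)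
    (W : {set 'I_m}) :
  (0 < n)%N -> (0 < k)%N -> (k <= m)%N ->
  EJRExact_run k A ws fs W ->
  EJR k A W.
Proof.
move=> n_gt0 k_gt0 _ run; have [_ _ _ sWt cardW] := run.
split=> // l Ns /andP[l_gt0 le_lk] coh.
have [/exists_inP[i iNs sat] | /exists_inPn unsat] :=
  boolP [exists i in Ns, l <= #|A i :&: W|]%N; first by exists i.
have {}unsat : {in Ns, forall i, #|A i :&: W| < l}%N by move=> i /unsat; rewrite -ltnNge.
have [c cNs cW] := cohesive_unelected n_gt0 l_gt0 coh unsat.
have cWt : c \notin Wpre ws (size ws) by apply: contra cW; apply: (subsetP sWt).
have unsat_t : {in Ns, forall i, #|A i :&: Wpre ws (size ws)| < l}%N.
  by move=> i iNs; apply: leq_ltn_trans (unsat i iNs); apply/subset_leq_card/setIS.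
have := cohesive_leq_ell n_gt0 le_lk coh cNs unsat_t.
by rewrite (ell_unelected_eq0 n_gt0 k_gt0 run cWt) leqNgt l_gt0.
Qed.
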